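(* Let $\mathbb{K}$ be a field of characteristic $0$ and let $V,V'$ be $\mathbb{K}$-vector spaces of dimensions $n,m$ with $n,m\ge d$. For every homogeneous polynomial functor $\mathcal{P}_d$ of degree $d$, the functors $\Omega_{V,d}(\mathcal{P}_d)$ and $\Omega_{V',d}(\mathcal{P}_d)$ are naturally equivalent.
   Context: For a homogeneous polynomial functor $P$ of degree $d$ on the category of finite-dimensional $\mathbb{K}$-spaces and a space $V$ with $\dim V\ge d$, $\Omega_{V,d}(P)(W)=\operatorname{Hom}_{\mathrm{GL}(V)}\bigl(\bigwedge^dV,P(W\otimes V)\bigr)$, where $\mathrm{GL}(V)$ acts on $W\otimes V$ via the factor $V$, and a linear map $h:W\to W'$ acts by post-composition with $P(h\otimes\mathrm{id}_V)$. *)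

From HB Require Import structures.
From mathcomp Require Import all_boot all_order all_algebra.
From mathcomp Require Import mpoly.
From mathcomp Require Import mxtens.
Set Implicit Arguments. Unset Strict Implicit. Unset Printing Implicit Defensive.
Import Order.TTheory GRing.Theory Num.Theory.
Local Open Scope ring_scope.

(* Finite-dimensional K-spaces are represented by the skeleton K^n (row
   vectors 'rV[K]_n); a linear map K^m -> K^n is a matrix A : 'M_(m,n)
   acting by v |-> v *m A, so "first A, then B" is A *m B. *)

Record polyFunctor (K : fieldType) (d : nat) := PolyFunctor {
  pf_obj : nat -> nat;
  pf_mor : forall m n, 'M[K]_(m, n) -> 'M[K]_(pf_obj m, pf_obj n);
  pf_id : forall n, pf_mor (1%:M : 'M[K]_n) = 1%:M;
  pf_comp : forall m n p (A : 'M[K]_(m, n)) (B : 'M[K]_(n, p)),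
      pf_mor (A *m B) = pf_mor A *m pf_mor B;
  pf_poly : forall m n, exists F : 'I_(pf_obj m) -> 'I_(pf_obj n) -> {mpoly K[m * n]},
      (forall i j, F i j \is d.-homog) /\
      (forall (A : 'M[K]_(m, n)) i j, pf_mor A i j = (F i j).@[fun k => mxvec A 0 k])
}.

(* d-element subsets of 'I_n : the standard basis e_S of /\^d K^n. *)
Definition dsub (n d : nat) := {S : {set 'I_n} | #|S| == d}.

(* This is the (S,T) entry of the
   matrix of /\^d g in the basis (e_S):  g e_S = \sum_T minor g S T e_T. *)
Definition minor (K : fieldType) (n d : nat) (g : 'M[K]_n) (S T : dsub n d) : K :=
  let rows := [seq [seq g s t | t <- enum (val T)] | s <- enum (val S)] in
  \det (\matrix_(i < d, j < d) nth 0 (nth [::] rows i) j).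

(* Ambient space of linear maps /\^d K^n -> P(K^w (x) K^n), given by the
   images of the basis vectors e_S. *)
Definition OmegaAmb (K : fieldType) (d : nat) (P : polyFunctor K d) (n w : nat) :=
  {ffun dsub n d -> 'rV[K]_(pf_obj P (w * n))}.

(* Omega_{K^n,d}(P)(K^w) = Hom_{GL(K^n)}(/\^d K^n, P(K^w (x) K^n)),
   GL acting on K^w (x) K^n via 1 (x) g. *)
Definition inOmega (K : fieldType) (d : nat) (P : polyFunctor K d) (n w : nat)
    (f : OmegaAmb P n w) : Prop :=
  forall g : 'M[K]_n, g \in unitmx -> forall S : dsub n d,
    \sum_(T : dsub n d) minor g S T *: f T
    = f S *m pf_mor P ((1%:M : 'M[K]_w) *t g).

Definition OmegaMap (K : fieldType) (d : nat) (P : polyFunctor K d) (n w w' : nat)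
    (h : 'M[K]_(w, w')) (f : OmegaAmb P n w) : OmegaAmb P n w' :=
  [ffun S => f S *m pf_mor P (h *t (1%:M : 'M[K]_n))].

From HB Require Import structures.
From mathcomp Require Import all_boot all_order all_algebra.
From mathcomp Require Import mpoly mxtens zify.
Import GRing.Theory.
Local Open Scope ring_scope.
Set Implicit Arguments. Unset Strict Implicit. Unset Printing Implicit Defensive.

(* An element f of Omega_{K^n,d}(P)(W) is determined by the single vector
   x = f(e_S0): its equivariance extends to all matrices g (GL_n is Zariski
   dense, K being infinite), and a g sending the coordinates S0 onto S gives
   f(e_S) = x P(1 (x) g).  Transporting x along the analogous maps K^n -> K^m
   gives a family over K^m; the transports in both directions are mutually
   inverse on Omega and natural in W.  That the transported family is
   equivariant is the identity, for d x m matrices r,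
     phi(r) = sum_T det(r_T) phi(e_T),   where phi(r) := x P(1 (x) e_S0^T r).
   Equivariance over K^n gives phi(X r) = det X phi(r), so phi is homogeneous
   in each row of r; being polynomial it is then additive in each row, and two
   row-multilinear maps that agree on matrices with standard basis rows are
   equal. *)

Section DSubsets.
Variables n d : nat.
Implicit Types S T : dsub n d.

Definition dsub_enum (S : dsub n d) (i : 'I_d) : 'I_n :=
  enum_val (cast_ord (esym (eqP (valP S))) i).

Lemma dsub_enumP S i : dsub_enum S i \in val S.
Proof. exact: enum_valP. Qed.

Lemma dsub_enum_inj S : injective (dsub_enum S).
Proof. by move=> i j /enum_val_inj /cast_ord_inj. Qed.

Lemma dsub_enum_surj S x : x \in val S -> exists i, dsub_enum S i = x.
Proof.
move=> xS; exists (cast_ord (eqP (valP S)) (enum_rank_in xS x)).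
by rewrite /dsub_enum cast_ordK enum_rankK_in.
Qed.

Lemma dsub_enum_nth S i x : dsub_enum S i = nth x (enum (val S)) i.
Proof. exact: enum_val_nth. Qed.

Lemma dsub_neq_notin S T : S != T -> exists2 x, x \in val S & x \notin val T.
Proof.
move=> neST; apply/exists_inP; rewrite -negb_forall_in; apply: contra neST.
move=> /forall_inP sST; apply/eqP/val_inj/eqP; rewrite eqEcard.
by rewrite (eqP (valP S)) (eqP (valP T)) leqnn andbT; apply/subsetP.
Qed.
End DSubsets.

Lemma exists_superset_card (T : finType) (A : {set T}) k :
  (#|A| <= k <= #|T|)%N -> exists2 B : {set T}, A \subset B & #|B| = k.
Proof.
elim: k => [|k IHk] /andP[leAk lekT].
  by exists A; rewrite ?subxx //; apply/eqP; rewrite -leqn0.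
have [eqAk|ltAk] := eqVneq #|A| k.+1; first by exists A.
have [B sAB cardB] : exists2 B : {set T}, A \subset B & #|B| = k.
  by apply: IHk; rewrite -ltnS ltn_neqAle ltAk leAk ltnW.
have : (0 < #|~: B|)%N by rewrite cardsCs setCK cardB subn_gt0.
case/card_gt0P => x; rewrite inE => xB.
exists (x |: B); first exact: subset_trans sAB (subsetUr _ _).
by rewrite cardsU1 xB cardB.
Qed.

Section Selection.
Variables (R : comNzRingType) (n d : nat).
Implicit Types S T : dsub n d.

Definition sel S : 'M[R]_(d, n) := rowsub (dsub_enum S) 1%:M.

Lemma sel_mul_tr S T : sel S *m (sel T)^T = \matrix_(i, j) (dsub_enum S i == dsub_enum T j)%:R.
Proof.
by apply/matrixP => i j; rewrite /sel trmx_mxsub trmx1 mulmx_colsub mul_rowsub_mx mulmx1 !mxE.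
Qed.

Lemma sel_mul_tr_id S : sel S *m (sel S)^T = 1%:M.
Proof.
by apply/matrixP => i j; rewrite sel_mul_tr !mxE (inj_eq (@dsub_enum_inj _ _ S)).
Qed.

Lemma det_sel_mul_tr S T : \det (sel S *m (sel T)^T) = (S == T)%:R.
Proof.
have [<-|neST] := eqVneq S T; first by rewrite sel_mul_tr_id det1.
have [x xT xS] : exists2 x, x \in val T & x \notin val S.
  by apply: dsub_neq_notin; rewrite eq_sym.
have [j ejx] := dsub_enum_surj xT.
rewrite (expand_det_col _ j) big1 // => i _; rewrite sel_mul_tr mxE ejx.
by rewrite (_ : _ == _ = false) ?mul0r //; apply: contraNF xS => /eqP <-; apply: dsub_enumP.
Qed.

End Selection.
Arguments sel {R n d} S.

Lemma map_sel (R R' : comNzRingType) (f : {rmorphism R -> R'}) n d (S : dsub n d) :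
  map_mx f (sel S) = sel S :> 'M[R']_(d, n).
Proof. by rewrite /sel map_mxsub map_mx1. Qed.

Lemma minorE (K : fieldType) n d (g : 'M[K]_n) (S T : dsub n d) :
  minor g S T = \det (sel S *m g *m (sel T)^T).
Proof.
rewrite /minor /sel trmx_mxsub mulmx_colsub mul_rowsub_mx trmx1 !mulmx1 mul1mx.
congr (\det _); apply/matrixP => i j; rewrite !mxE.
have sizeS : size (enum (val S)) = d by rewrite -cardE; exact/eqP/(valP S).
have sizeT : size (enum (val T)) = d by rewrite -cardE; exact/eqP/(valP T).
rewrite (nth_map (dsub_enum S i)) ?sizeS // (nth_map (dsub_enum T j)) ?sizeT //.
by rewrite -!dsub_enum_nth.
Qed.

Section CharZeroPolynomials.
Variable K : fieldType.
Hypothesis charK0 : [pchar K] =i pred0.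

Lemma natr_inj : injective (fun k : nat => k%:R : K).
Proof.
have natf_eq0 := (pcharf0P K).1 charK0.
move=> i j /= eqij; wlog leij : i j eqij / (i <= j)%N.
  by move=> W; case/orP: (leq_total i j) => /W -> //.
by apply/eqP; rewrite eqn_leq leij /= -subn_eq0 -natf_eq0 natrB // eqij subrr.
Qed.

Lemma poly_fun_eq0 (p : {poly K}) : (forall t, p.[t] = 0) -> p = 0.
Proof.
move=> p0; apply: (@roots_geq_poly_eq0 _ p [seq i%:R | i <- iota 0 (size p)]).
- by apply/allP => _ /mapP[i _ ->]; apply/rootP.
- by rewrite map_inj_uniq ?iota_uniq //; apply: natr_inj.
- by rewrite size_map size_iota.
Qed.

Lemma poly_eq0_off_roots (p q : {poly K}) :
  q != 0 -> (forall t, ~~ root q t -> p.[t] = 0) -> p = 0.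
Proof.
move=> nz_q p0; suff /eqP : p * q = 0 by rewrite mulf_eq0 (negPf nz_q) orbF => /eqP.
apply: poly_fun_eq0 => t; rewrite hornerM.
by have [/rootP ->|/p0 ->] := boolP (root q t); rewrite ?mulr0 ?mul0r.
Qed.

Lemma reciprocal_horner1 (p q : {poly K}) :
  (forall s, s != 0 -> q.[s] = s * p.[s^-1]) -> p.[1] = p.[0] + q.[0].
Proof.
move=> qp; set N := (size p).+2.
(* [r] is the reversal of [p]; comparing the coefficients of [X^N q = X r]
   forces [p] to be affine with [q(0) = p_1]. *)
pose r := \sum_(k < N) p`_k *: 'X^(N - k).
have eq_qr : 'X^N * q = 'X * r.
  apply/eqP; rewrite -subr_eq0; apply/eqP/(poly_eq0_off_roots (q := 'X)).
    by rewrite polyX_eq0.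
  move=> s; rewrite rootX => nz_s; rewrite !hornerE.
  apply/eqP; rewrite subr_eq0 qp // (horner_coef_wide _ (leqW (leqnSn _) : (size p <= N)%N)).
  rewrite /r horner_sum mulrCA mulr_sumr; apply/eqP; congr (_ * _).
  apply: eq_bigr => k _; rewrite hornerZ hornerXn exprVn mulrCA exprB ?unitfE //.
  exact: ltnW.
have coef_r j : (j < N)%N -> r`_(N - j) = p`_j.
  move=> ltjN; rewrite /r coef_sum (bigD1 (Ordinal ltjN)) //= coefZ coefXn eqxx mulr1.
  rewrite big1 ?addr0 // => k neq_kj.
  rewrite coefZ coefXn eqn_sub2lE ?(ltnW ltjN) ?(ltnW (ltn_ord k)) // eq_sym.
  by rewrite (negPf (neq_kj : k != j :> nat)) mulr0.
have p_ge2 j : (2 <= j)%N -> p`_j = 0.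
  move=> le2j; have [ltjN|leNj] := ltnP j N; last first.
    by rewrite nth_default // (leq_trans _ leNj) // ltnW.
  have := congr1 (fun s : {poly K} => s`_(N - j).+1) eq_qr.
  rewrite /= coefXnM coefXM /= coef_r //.
  by rewrite ifT //; lia.
have q0 : q`_0 = p`_1.
  have := congr1 (fun s : {poly K} => s`_N) eq_qr.
  rewrite /= coefXnM coefXM ltnn subnn /= => ->.
  by rewrite -(coef_r 1) // subn1.
have -> : p = (p`_0)%:P + p`_1 *: 'X.
  apply/polyP => -[|[|j]]; rewrite coefD coefC coefZ coefX ?mulr1 ?mulr0 ?addr0 ?add0r //=.
  by rewrite p_ge2.
by rewrite !hornerE horner_coef0 q0.
Qed.

Lemma homogeneous_additive (V : lmodType K) N (psi : V -> 'rV[K]_N) :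
  (forall a u, psi (a *: u) = a *: psi u) ->
  (forall u v, exists p : 'rV[{poly K}]_N,
     forall t, psi (u + t *: v) = map_mx (horner_eval t) p) ->
  forall u v, psi (u + v) = psi u + psi v.
Proof.
move=> psiZ psi_poly u v; apply/rowP => l; rewrite mxE.
have [p psi_p] := psi_poly u v; have [q psi_q] := psi_poly v u.
have entry (x : 'rV[{poly K}]_N) t : (x 0 l).[t] = map_mx (horner_eval t) x 0 l by rewrite mxE.
have := reciprocal_horner1 (p := p 0 l) (q := q 0 l).
rewrite !entry -!psi_p -psi_q !scale0r !addr0 scale1r; apply => s nz_s.
rewrite !entry -psi_p -psi_q.
have -> : v + s *: u = s *: (u + s^-1 *: v).
  by rewrite scalerDr scalerA mulfV // scale1r addrC.
by rewrite psiZ mxE.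
Qed.
End CharZeroPolynomials.

Section RowMultilinear.
Variables (R : nzRingType) (V : lmodType R) (d m : nat).
Implicit Types (A : 'M[R]_(d, m)) (F : 'M[R]_(d, m) -> V).

Definition row_set A (k : 'I_d) (v : 'rV[R]_m) : 'M[R]_(d, m) :=
  \matrix_(i, j) (if i == k then v 0 j else A i j).

Lemma row_row_set A k v i : row i (row_set A k v) = if i == k then v else row i A.
Proof.
by case: eqP => [->|/eqP ne_ik]; apply/rowP => j; rewrite !mxE ?eqxx ?(negPf ne_ik).
Qed.

Lemma row_set_row A k : row_set A k (row k A) = A.
Proof. by apply/matrixP => i j; rewrite !mxE; case: eqP => // ->. Qed.

Definition row_multilinear F := forall A k a u v,
  F (row_set A k (a *: u + v)) = a *: F (row_set A k u) + F (row_set A k v).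

Lemma row_multilinear_sum F A k (I : Type) (r : seq I) (c : I -> R) v :
  row_multilinear F ->
  F (row_set A k (\sum_(i <- r) c i *: v i)) = \sum_(i <- r) c i *: F (row_set A k (v i)).
Proof.
move=> linF; elim: r => [|i r IHr]; last by rewrite !big_cons -IHr -linF.
by rewrite !big_nil; have := linF A k (-1) 0 0; rewrite scaler0 addr0 scaleN1r addNr.
Qed.

Lemma row_multilinear_eq0 F : row_multilinear F ->
  (forall J : 'I_d -> 'I_m, F (rowsub J 1%:M) = 0) -> forall A, F A = 0.
Proof.
move=> linF F0.
(* Induction on the number of leading rows that need not be basis vectors. *)
suff F0k k : (k <= d)%N -> forall A,
    (forall i : 'I_d, (k <= i)%N -> exists j, row i A = delta_mx 0 j) -> F A = 0.
  by move=> A; apply: (F0k d) => // i; rewrite leqNgt ltn_ord.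
elim: k => [_ A basisA|k IHk ltkd A basisA].
  have [J AJ] := fin_all_exists (fun i => basisA i (leq0n i)).
  suff -> : A = rowsub J 1%:M by apply: F0.
  by apply/row_matrixP => i; rewrite AJ row_rowsub row1.
pose k' := Ordinal ltkd.
rewrite -(row_set_row A k') (row_sum_delta (row k' A)) row_multilinear_sum //.
rewrite big1 // => j _; rewrite (IHk (ltnW ltkd)) ?scaler0 // => i leki.
rewrite row_row_set; case: eqP => [_|ne_ik]; first by exists j.
apply: basisA; rewrite ltn_neqAle leki andbT.
by apply/eqP => eq_ki; apply: ne_ik; apply: val_inj; rewrite /= eq_ki.
Qed.
End RowMultilinear.

Lemma det_row_set_mulmx (R : comNzRingType) d m (A : 'M[R]_(d, m)) (B : 'M[R]_(m, d))
    k a u v :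
  \det (row_set A k (a *: u + v) *m B)
  = a * \det (row_set A k u *m B) + \det (row_set A k v *m B).
Proof.
have row'_set w : row' k (row_set A k w *m B) = row' k A *m B.
  apply/matrixP => i j; rewrite !mxE; apply: eq_bigr => l _.
  by rewrite !mxE eq_sym (negPf (neq_lift k i)).
rewrite -[\det (row_set A k v *m B)]mul1r; apply: (determinant_multilinear (i0 := k)).
- by rewrite !row_mul !row_row_set eqxx scale1r mulmxDl scalemxAl.
- by rewrite !row'_set.
- by rewrite !row'_set.
Qed.

Lemma row_setZ (R : comNzRingType) d m (A : 'M[R]_(d, m)) k a u :
  row_set A k (a *: u) = diag_mx (\row_i (if i == k then a else 1)) *m row_set A k u.
Proof.
rewrite mul_diag_mx; apply/matrixP => i j; rewrite !mxE.
by case: eqP; rewrite ?mul1r.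
Qed.

Lemma det_diag_single (R : comNzRingType) d k (a : R) :
  \det (diag_mx (\row_(i < d) (if i == k then a else 1))) = a.
Proof.
by rewrite det_diag (bigD1 k) //= big1 ?mulr1 => [|i /negPf neik]; rewrite mxE ?eqxx ?neik.
Qed.

Lemma map_row_set (aR rR : nzRingType) (f : aR -> rR) d m (A : 'M[aR]_(d, m)) k v :
  map_mx f (row_set A k v) = row_set (map_mx f A) k (map_mx f v).
Proof. by apply/matrixP => i j; rewrite !mxE; case: eqP. Qed.

Lemma map_mx_hornerC (R : comNzRingType) m n t (A : 'M[R]_(m, n)) :
  map_mx (horner_eval t) (map_mx polyC A) = A.
Proof. by apply/matrixP => i j; rewrite !mxE horner_evalE hornerC. Qed.

Lemma horner_char_poly_mx (R : comNzRingType) n t (A : 'M[R]_n) :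
  map_mx (horner_eval t) (char_poly_mx A) = t%:M - A.
Proof. by apply/matrixP => i j; rewrite !mxE horner_evalE !hornerE hornerMn hornerX. Qed.

Section Omega.
Variables (K : fieldType) (d : nat) (P : polyFunctor K d).
Hypothesis charK0 : [pchar K] =i pred0.

Lemma pf_mor_tens1_mul w a b c (A : 'M[K]_(a, b)) (B : 'M[K]_(b, c)) :
  pf_mor P ((1%:M : 'M_w) *t A) *m pf_mor P ((1%:M : 'M_w) *t B)
  = pf_mor P ((1%:M : 'M_w) *t (A *m B)).
Proof. by rewrite -pf_comp tensmx_mul mulmx1. Qed.

Lemma pf_mor_map_horner a b (Mp : 'M[{poly K}]_(a, b)) :
  exists Pp, forall t, pf_mor P (map_mx (horner_eval t) Mp) = map_mx (horner_eval t) Pp.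
Proof.
have [F [_ PF]] := pf_poly P a b.
exists (\matrix_(i, j) mmap polyC (mxvec Mp 0) (F i j)) => t.
apply/matrixP => i j; rewrite PF !mxE horner_evalE mevalE horner_sum.
apply: eq_bigr => mono _; rewrite hornerM hornerC horner_prod; congr (_ * _).
by apply: eq_bigr => k _; rewrite horner_exp -map_mxvec mxE.
Qed.

Lemma inOmega_all n w (f : OmegaAmb P n w) : inOmega f ->
  forall (g : 'M[K]_n) S, \sum_T minor g S T *: f T = f S *m pf_mor P (1%:M *t g).
Proof.
move=> fO g S.
(* Both sides are polynomial along [t |-> t%:M + g] and agree wherever it is
   invertible, i.e. off the roots of the characteristic polynomial of [- g]. *)
have eval_G t : map_mx (horner_eval t) (char_poly_mx (- g)) = t%:M + g.
  by rewrite horner_char_poly_mx opprK.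
have [Pp PPp] := pf_mor_map_horner ((1%:M : 'M_w) *t char_poly_mx (- g)).
pose D := \sum_T \det (sel S *m char_poly_mx (- g) *m (sel T)^T) *: map_mx polyC (f T)
          - map_mx polyC (f S) *m Pp.
have D_eval t : map_mx (horner_eval t) D
    = \sum_T minor (t%:M + g) S T *: f T - f S *m pf_mor P (1%:M *t (t%:M + g)).
  rewrite -eval_G -(map_mx1 (horner_eval t)).
  rewrite -map_mxT PPp map_mxB map_mxM map_mx_hornerC map_mx_sum; congr (_ - _).
  apply: eq_bigr => T _; rewrite map_mxZ map_mx_hornerC minorE -det_map_mx.
  by rewrite !map_mxM -map_trmx !map_sel.
have D0 : D = 0.
  apply/rowP => l; rewrite [RHS]mxE.
  apply: (poly_eq0_off_roots charK0 (q := char_poly (- g))).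
    exact: monic_neq0 (char_poly_monic _).
  move=> t nroot_t; have := congr1 (fun M : 'rV_ _ => M 0 l) (D_eval t).
  rewrite mxE horner_evalE => ->; rewrite fO ?subrr ?mxE //.
  rewrite unitmxE unitfE -eval_G det_map_mx.
  exact: nroot_t.
by apply/eqP; have := D_eval 0; rewrite D0 map_mx0 raddf0 add0r => /esym/eqP; rewrite subr_eq0.
Qed.

Lemma inOmega_sel n w (f : OmegaAmb P n w) : inOmega f ->
  forall S T, f T = f S *m pf_mor P (1%:M *t ((sel S)^T *m sel T)).
Proof.
move=> fO S T; rewrite -inOmega_all // (bigD1 T) //= big1 ?addr0 => [|U neUT];
  rewrite minorE !mulmxA sel_mul_tr_id mul1mx det_sel_mul_tr ?eqxx ?scale1r //.
by rewrite eq_sym (negPf neUT) scale0r.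
Qed.

(* [(sel S0)^T *m sel U] maps the coordinates S0 of K^n onto U in order. *)
Definition transport n m (S0 : dsub n d) w (f : OmegaAmb P n w) : OmegaAmb P m w :=
  [ffun U => f S0 *m pf_mor P (1%:M *t ((sel S0)^T *m sel U))].

Lemma transport_linear n m (S0 : dsub n d) w a (f g : OmegaAmb P n w) :
  transport m S0 (a *: f + g) = a *: transport m S0 f + transport m S0 g.
Proof. by apply/ffunP => U; rewrite !ffunE mulmxDl scalemxAl. Qed.

Lemma transport_OmegaMap n m (S0 : dsub n d) w w' (h : 'M[K]_(w, w')) f :
  transport m S0 (OmegaMap h f) = OmegaMap h (transport m S0 f).
Proof.
apply/ffunP => U; rewrite !ffunE -!mulmxA -!pf_comp !tensmx_mul.
by rewrite !mulmx1 !mul1mx.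
Qed.

Lemma transportK n m w (S0 : dsub n d) (U0 : dsub m d) (f : OmegaAmb P n w) :
  inOmega f -> transport n U0 (transport m S0 f) = f.
Proof.
move=> fO; apply/ffunP => S; rewrite !ffunE -mulmxA pf_mor_tens1_mul.
by rewrite mulmxA -[_ *m sel U0 *m _]mulmxA sel_mul_tr_id mulmx1 -inOmega_sel.
Qed.

Section FrameMap.
Variables (n m w : nat) (S0 : dsub n d) (f : OmegaAmb P n w).
Hypothesis fO : inOmega f.

Definition frame_map (r : 'M[K]_(d, m)) := f S0 *m pf_mor P (1%:M *t ((sel S0)^T *m r)).

Definition plucker_expansion (r : 'M[K]_(d, m)) :=
  \sum_(T : dsub m d) \det (r *m (sel T)^T) *: frame_map (sel T).

Lemma frame_map_mulmx (X : 'M[K]_d) r : frame_map (X *m r) = \det X *: frame_map r.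
Proof.
(* [X] acts through [(sel S0)^T X sel S0], whose only nonzero minor in row S0
   is [\det X]. *)
rewrite /frame_map.
have -> : (sel S0)^T *m (X *m r) = ((sel S0)^T *m X *m sel S0) *m ((sel S0)^T *m r).
  by rewrite !mulmxA -[_ *m sel S0 *m _]mulmxA sel_mul_tr_id mulmx1.
rewrite -pf_mor_tens1_mul mulmxA -inOmega_all // (bigD1 S0) //= big1 ?addr0.
  rewrite minorE !mulmxA sel_mul_tr_id mul1mx -mulmxA det_mulmx det_sel_mul_tr eqxx.
  by rewrite mulr1 scalemxAl.
move=> T neTS0; rewrite minorE !mulmxA sel_mul_tr_id mul1mx -mulmxA det_mulmx.
by rewrite det_sel_mul_tr eq_sym (negPf neTS0) mulr0 scale0r.
Qed.

Lemma frame_map_map_horner (Rp : 'M[{poly K}]_(d, m)) :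
  exists p, forall t, frame_map (map_mx (horner_eval t) Rp) = map_mx (horner_eval t) p.
Proof.
have [Pp PPp] := pf_mor_map_horner ((1%:M : 'M_w) *t (map_mx polyC (sel S0)^T *m Rp)).
exists (map_mx polyC (f S0) *m Pp) => t.
by rewrite /frame_map map_mxM map_mx_hornerC -PPp map_mxT map_mx1 map_mxM map_mx_hornerC.
Qed.

Lemma frame_map_multilinear : row_multilinear frame_map.
Proof.
move=> A k a u v.
have psiZ c x : frame_map (row_set A k (c *: x)) = c *: frame_map (row_set A k x).
  by rewrite row_setZ frame_map_mulmx det_diag_single.
rewrite -psiZ.
apply: (homogeneous_additive charK0 (psi := fun x => frame_map (row_set A k x))).
  exact: psiZ.
move=> x y; have [p Hp] := frame_map_map_horner
  (row_set (map_mx polyC A) k (map_mx polyC x + 'X *: map_mx polyC y)).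
exists p => t; rewrite -Hp map_row_set map_mxD map_mxZ !map_mx_hornerC /=.
by rewrite horner_evalE hornerX.
Qed.

Lemma plucker_expansion_multilinear : row_multilinear plucker_expansion.
Proof.
move=> A k a u v; rewrite /plucker_expansion scaler_sumr -big_split; apply: eq_bigr => T _.
by rewrite det_row_set_mulmx scalerDl scalerA.
Qed.

Lemma plucker_expansion_mulmx (X : 'M[K]_d) r :
  plucker_expansion (X *m r) = \det X *: plucker_expansion r.
Proof.
rewrite /plucker_expansion scaler_sumr; apply: eq_bigr => T _.
by rewrite -mulmxA det_mulmx scalerA.
Qed.

Lemma plucker_expansion_sel U : plucker_expansion (sel U) = frame_map (sel U).
Proof.
rewrite /plucker_expansion (bigD1 U) //= big1 ?addr0 => [|T neTU];
  rewrite det_sel_mul_tr ?eqxx ?scale1r //.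
by rewrite eq_sym (negPf neTU) scale0r.
Qed.

Hypothesis hm : (d <= m)%N.

Lemma frame_map_plucker r : frame_map r = plucker_expansion r.
Proof.
apply/eqP; rewrite -subr_eq0; apply/eqP; move: r.
apply: (row_multilinear_eq0 (F := fun r => frame_map r - plucker_expansion r)).
  move=> A k a u v.
  by rewrite frame_map_multilinear plucker_expansion_multilinear scalerBr opprD addrACA.
(* [rowsub J 1%:M] factors through [sel U] for a d-subset U containing the
   image of J. *)
move=> J; have [U sJU /eqP cardU] :
    exists2 U : {set 'I_m}, [set J i | i in 'I_d] \subset U & #|U| = d.
  apply: exists_superset_card.
  by rewrite card_ord hm andbT -[X in (_ <= X)%N]card_ord leq_imset_card.
pose U' : dsub m d := exist _ U cardU.
have [k Jk] : exists k : 'I_d -> 'I_d, forall i, dsub_enum U' (k i) = J i.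
  apply: (@fin_all_exists _ (fun=> 'I_d) (fun i s => dsub_enum U' s = J i)) => i.
  by apply: dsub_enum_surj; apply: (subsetP sJU); apply: imset_f.
have -> : rowsub J (1%:M : 'M[K]_m) = rowsub k 1%:M *m sel U'.
  by rewrite -rowsubE /sel -rowsub_comp; apply/matrixP => i j; rewrite !mxE /= Jk.
rewrite frame_map_mulmx plucker_expansion_mulmx -scalerBr plucker_expansion_sel.
by rewrite subrr scaler0.
Qed.

Lemma transport_inOmega : inOmega (transport m S0 f).
Proof.
move=> g _ U; rewrite ffunE -mulmxA pf_mor_tens1_mul -mulmxA.
rewrite -/(frame_map (sel U *m g)) frame_map_plucker; apply: eq_bigr => T _.
by rewrite ffunE minorE.
Qed.
End FrameMap.
End Omega.

Lemma card_widen_ord_set n d (hdn : (d <= n)%N) : #|[set widen_ord hdn i | i in 'I_d]| == d.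
Proof. by rewrite card_imset ?card_ord // => i j [] /val_inj. Qed.

Definition dsub_widen n d (hdn : (d <= n)%N) : dsub n d :=
  exist (fun S : {set _} => #|S| == d) _ (card_widen_ord_set hdn).

Theorem mainTheorem12 (K : fieldType) (charK0 : [pchar K] =i pred0)
    (d n m : nat) (hn : (d <= n)%N) (hm : (d <= m)%N) (P : polyFunctor K d) :
  exists eta : forall w : nat, OmegaAmb P n w -> OmegaAmb P m w,
    (forall w : nat,
       (forall (a : K) (x y : OmegaAmb P n w), eta w (a *: x + y) = a *: eta w x + eta w y)
       /\ (forall x, inOmega x -> inOmega (eta w x))
       /\ (forall x y, inOmega x -> inOmega y -> eta w x = eta w y -> x = y)
       /\ (forall y, inOmega y -> exists2 x, inOmega x & eta w x = y))
    /\ (forall (w w' : nat) (h : 'M[K]_(w, w')) (x : OmegaAmb P n w),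
          inOmega x -> eta w' (OmegaMap h x) = OmegaMap h (eta w x)).
Proof.
pose S0 := dsub_widen hn; pose U0 := dsub_widen hm.
exists (fun w => transport m S0 (w := w)); split=> [w|w w' h x _]; last first.
  exact: transport_OmegaMap.
split; first exact: transport_linear.
split; first by move=> x xO; apply: transport_inOmega.
split=> [x y xO yO eq_xy|y yO].
  by rewrite -(transportK charK0 S0 U0 xO) eq_xy transportK.
by exists (transport n U0 y); [apply: transport_inOmega | apply: transportK].
Qed.
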